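(* Let $K\subset\mathbb{C}$ be a totally imaginary quartic number field with ring of integers $\mathcal{O}_K$, such that $K_0=K\cap\mathbb{R}$ is a real quadratic field. Let $\sigma:K\to\mathbb{C}$ be a field embedding whose restriction to $K_0$ is the non-trivial automorphism of $K_0$. Let $\mathcal{B}\subseteq\mathbb{C}$ be a bounded set containing $0$ as an interior point, and let $$\mathcal{S}_{\mathcal B}=\{z\in\mathcal{O}_K : \sigma(z)\in\mathcal{B}\}.$$ If $z_1,z_2\in\mathcal{S}_{\mathcal B}$ with $z_1\neq z_2$, then $$|z_1-z_2|\ge\frac{1}{2\operatorname{diam}(\mathcal{B})}.$$
   Context: Elements of $K$ are regarded as complex numbers via the inclusion $K\subset\mathbb{C}$; $\operatorname{diam}(\mathcal B)=\sup\{|a-b|:a,b\in\mathcal B\}$. *)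

From HB Require Import structures.
From mathcomp Require Import all_boot all_order all_algebra.
From mathcomp Require Import complex.
From mathcomp Require Import all_classical all_reals.
Set Implicit Arguments. Unset Strict Implicit. Unset Printing Implicit Defensive.
Import Order.TTheory GRing.Theory Num.Theory.
Local Open Scope ring_scope.
Local Open Scope classical_set_scope.

Definition cabs (R : realType) (z : R[i]) : R := complex.Re `|z|.

Definition diam (R : realType) (B : set R[i]) : R :=
  sup [set cabs (a - b) | a in B & b in B].

Definition is_subfield (C : fieldType) (K : set C) : Prop :=
  K 1 /\ (forall x y, K x -> K y -> K (x - y)) /\
  (forall x y, K x -> K y -> K (x * y)) /\
  (forall x, K x -> x != 0 -> K x^-1).

Definition Qdim (C : fieldType) (K : set C) (n : nat) : Prop :=
  exists b : 'I_n -> C,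
    (forall x, K x <-> exists q : 'I_n -> rat, x = \sum_(i < n) ratr (q i) * b i) /\
    (forall q : 'I_n -> rat, \sum_(i < n) ratr (q i) * b i = 0 -> forall i, q i = 0).

Definition number_field (C : fieldType) (K : set C) (n : nat) : Prop :=
  is_subfield K /\ Qdim K n.

(* field embedding of K into C (a ring morphism K -> C; values outside K irrelevant) *)
Definition field_embedding (C : fieldType) (K : set C) (s : C -> C) : Prop :=
  s 1 = 1 /\
  (forall x y, K x -> K y -> s (x + y) = s x + s y) /\
  (forall x y, K x -> K y -> s (x * y) = s x * s y).

Definition totally_imaginary (R : realType) (K : set R[i]) : Prop :=
  forall s : R[i] -> R[i], field_embedding K s -> exists x, K x /\ s x \isn't Num.real.

Definition real_part_field (R : realType) (K : set R[i]) : set R[i] :=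
  [set x | K x /\ x \is Num.real].

Definition ring_of_integers (C : fieldType) (K : set C) : set C :=
  [set z | K z /\ integralOver (intr : int -> C) z].

Definition restricts_to_nontrivial_aut (C : fieldType) (F : set C) (s : C -> C) : Prop :=
  (forall x, F x -> F (s x)) /\ (forall y, F y -> exists x, F x /\ s x = y) /\
  (exists x, F x /\ s x != x).

From HB Require Import structures.
From mathcomp Require Import all_boot all_order all_algebra.
From mathcomp Require Import complex.
From mathcomp Require Import all_classical all_reals.
From mathcomp Require algC algnum.
From mathcomp Require Import ring lra.
Set Implicit Arguments. Unset Strict Implicit. Unset Printing Implicit Defensive.
Import Order.TTheory GRing.Theory Num.Theory.
Local Open Scope ring_scope.

(** Let z = z1 - z2, a nonzero algebraic integer of K. Since K0 is real quadratic and
   K = K0(x) with x non-real and quadratic over K0, complex conjugation maps K to itself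
   and commutes with sigma. Hence n = z * conj z lies in K0, and its norm to Q,
   n * sigma n = |z|^2 |sigma z|^2, is a positive rational algebraic integer, so
   |z| |sigma z| >= 1. Finally |sigma z| = |sigma z1 - sigma z2| <= diam B. *)

Section Subfield.
Variables (F : fieldType) (K : set F).
Hypothesis sK : is_subfield K.

Lemma subfield1 : K 1. Proof. by case: sK. Qed.
Lemma subfieldB x y : K x -> K y -> K (x - y).
Proof. by case: sK => _ [hB _]; apply: hB. Qed.
Lemma subfieldM x y : K x -> K y -> K (x * y).
Proof. by case: sK => _ [_ [hM _]]; apply: hM. Qed.
Lemma subfieldV x : K x -> x != 0 -> K x^-1.
Proof. by case: sK => _ [_ [_ hV]]; apply: hV. Qed.

Lemma subfield0 : K 0. Proof. by rewrite -(subrr 1); apply: subfieldB; apply: subfield1. Qed.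
Lemma subfieldN x : K x -> K (- x). Proof. by rewrite -sub0r; apply: subfieldB subfield0. Qed.
Lemma subfieldD x y : K x -> K y -> K (x + y).
Proof. by move=> Kx /subfieldN Ky; rewrite -[y]opprK; apply: subfieldB. Qed.

Lemma subfield_nat n : K n%:R.
Proof.
by elim: n => [|n IHn]; [apply: subfield0 | rewrite mulrS; apply: subfieldD subfield1 _].
Qed.

Lemma subfield_int (m : int) : K m%:~R.
Proof. by case: m => n; rewrite ?NegzE ?mulrNz; [|apply: subfieldN]; apply: subfield_nat. Qed.

Variable s : F -> F.
Hypothesis es : field_embedding K s.

Lemma embedding1 : s 1 = 1. Proof. by case: es. Qed.
Lemma embeddingD x y : K x -> K y -> s (x + y) = s x + s y.
Proof. by case: es => _ [hD _]; apply: hD. Qed.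
Lemma embeddingM x y : K x -> K y -> s (x * y) = s x * s y.
Proof. by case: es => _ [_ hM]; apply: hM. Qed.

Lemma embedding0 : s 0 = 0.
Proof.
have := embeddingD subfield0 subfield0.
by rewrite addr0 => /eqP; rewrite -subr_eq subrr eq_sym => /eqP.
Qed.

Lemma embeddingN x : K x -> s (- x) = - s x.
Proof.
move=> Kx; apply/eqP; rewrite -subr_eq0 opprK -embeddingD ?addNr ?embedding0 //.
exact: subfieldN.
Qed.

Lemma embeddingB x y : K x -> K y -> s (x - y) = s x - s y.
Proof. by move=> Kx Ky; rewrite embeddingD ?embeddingN //; apply: subfieldN. Qed.

Lemma embedding_nat n : s n%:R = n%:R.
Proof.
elim: n => [|n IHn]; first exact: embedding0.
rewrite !mulrS embeddingD ?IHn ?embedding1 //; first exact: subfield1.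
exact: subfield_nat.
Qed.

Lemma embedding_int (m : int) : s m%:~R = m%:~R.
Proof.
by case: m => n; rewrite ?NegzE ?mulrNz ?embeddingN ?embedding_nat //; apply: subfield_nat.
Qed.

Lemma embedding_unit x : K x -> x != 0 -> s x * s x^-1 = 1.
Proof.
by move=> Kx x0; rewrite -embeddingM ?mulfV ?embedding1 //; apply: subfieldV.
Qed.

Lemma embedding_eq0 x : K x -> x != 0 -> s x != 0.
Proof.
move=> Kx x0; apply/eqP => sx0.
by move: (embedding_unit Kx x0); rewrite sx0 mul0r => /eqP; rewrite eq_sym oner_eq0.
Qed.

Lemma embeddingV x : K x -> x != 0 -> s x^-1 = (s x)^-1.
Proof.
move=> Kx x0; apply: (mulfI (embedding_eq0 Kx x0)).
by rewrite embedding_unit // mulfV ?embedding_eq0.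
Qed.

Lemma embedding_horner (p : {poly int}) z : K z ->
  K (map_poly intr p).[z] /\ s (map_poly intr p).[z] = (map_poly intr p).[s z].
Proof.
move=> Kz; elim/poly_ind: p => [|p c [Kpz spz]].
  by rewrite rmorph0 !horner0 embedding0; split=> //; apply: subfield0.
rewrite rmorphD rmorphM /= map_polyX map_polyC !hornerE.
have Kpzz := subfieldM Kpz Kz; have Kc := subfield_int c.
by rewrite embeddingD ?embeddingM ?spz ?embedding_int //; split=> //; apply: subfieldD.
Qed.

Lemma embedding_integral z : K z -> integralOver intr z -> integralOver intr (s z).
Proof.
move=> Kz [p monp /eqP pz0]; exists p => //; apply/eqP.
by have [_ <-] := embedding_horner p Kz; rewrite pz0 embedding0.
Qed.

End Subfield.

Section SubfieldRat.
Variables (C : numFieldType) (K : set C).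
Hypothesis sK : is_subfield K.

Lemma subfield_rat (q : rat) : K (ratr q).
Proof.
apply: subfieldM (subfield_int sK _) (subfieldV sK (subfield_int sK _) _) => //.
by rewrite intr_eq0 denq_neq0.
Qed.

Variable s : C -> C.
Hypothesis es : field_embedding K s.

Lemma embedding_rat q : s (ratr q) = ratr q.
Proof.
have Kd := subfield_int sK (denq q).
have d0 : (denq q)%:~R != 0 :> C by rewrite intr_eq0 denq_neq0.
rewrite (embeddingM es) ?(embeddingV sK es) ?(embedding_int sK es) //.
  by apply: subfield_int.
exact: subfieldV.
Qed.

Lemma moved_rat_free x (a b : rat) : s x != x -> ratr a + ratr b * x = 0 -> a = 0 /\ b = 0.
Proof.
move=> sxx abx0; have [b0|b0] := eqVneq b 0.
  by move: abx0; rewrite b0 rmorph0 mul0r addr0 => /eqP; rewrite fmorph_eq0 => /eqP.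
suff xE : x = ratr (- a / b) by rewrite xE embedding_rat eqxx in sxx.
apply: (mulfI (x := ratr b)); first by rewrite fmorph_eq0.
rewrite rmorphM rmorphN fmorphV mulrCA mulfV ?fmorph_eq0 // mulr1.
by apply/eqP; rewrite -addr_eq0 addrC abx0.
Qed.

End SubfieldRat.

Lemma Qdim_dependent (C : numFieldType) (K : set C) n m (f : 'I_m -> C) :
  Qdim K n -> (n < m)%N -> (forall i, K (f i)) ->
  exists2 u : 'I_m -> rat, exists i, u i != 0 & \sum_i ratr (u i) * f i = 0.
Proof.
move=> [b [Kspan _]] ltnm Kf.
have [c fE] := boolp.choice (fun i => iffLR (Kspan (f i)) (Kf i)).
pose A : 'M[rat]_(m, n) := \matrix_(i, j) c i j.
have [i0 ker_i0] : exists i0, row i0 (kermx A) != 0.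
  apply/boolp.not_existsP => ker0; move: (rank_leq_col A).
  suff /eqP -> : row_free A by rewrite leqNgt ltnm.
  rewrite -kermx_eq0; apply/eqP/row_matrixP => i.
  by rewrite row0; apply/eqP/negPn/negP; apply: ker0.
set u := row i0 (kermx A) in ker_i0.
have uA : u *m A = 0 by rewrite /u -row_mul mulmx_ker row0.
exists (fun i => u 0 i).
  apply/boolp.not_existsP => u0; case/negP: ker_i0; apply/eqP/rowP => j.
  by rewrite [RHS]mxE; apply/eqP/negPn/negP; apply: u0.
transitivity (\sum_j ratr ((u *m A) 0 j) * b j).
  under eq_bigr do rewrite fE mulr_sumr.
  rewrite exchange_big /=; apply: eq_bigr => j _.
  rewrite !mxE rmorph_sum mulr_suml; apply: eq_bigr => i _.
  by rewrite !mxE rmorphM mulrA.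
by rewrite uA; apply: big1 => j _; rewrite mxE rmorph0 mul0r.
Qed.

Lemma Qdim_free_spans (C : numFieldType) (K : set C) n (g : 'I_n -> C) :
  Qdim K n -> (forall i, K (g i)) ->
  (forall q : 'I_n -> rat, \sum_i ratr (q i) * g i = 0 -> forall i, q i = 0) ->
  forall y, K y -> exists q : 'I_n -> rat, y = \sum_i ratr (q i) * g i.
Proof.
move=> dimK Kg g_free y Ky.
pose f (i : 'I_n.+1) := if unlift ord0 i is Some j then g j else y.
have Kf i : K (f i) by rewrite /f; case: (unlift ord0 i).
have [u [i1 ui1] ufE] := Qdim_dependent dimK (ltnSn n) Kf.
rewrite big_ord_recl /= /f unlift_none in ufE.
rewrite (eq_bigr (fun j : 'I_n => ratr (u (lift ord0 j)) * g j)) in ufE; last first.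
  by move=> j _; rewrite liftK.
have [u00|u0_neq0] := eqVneq (u ord0) 0.
  move: ufE; rewrite u00 rmorph0 mul0r add0r => /g_free u0.
  by move: ui1; case: (unliftP ord0 i1) => [j ->|->]; rewrite ?u0 ?u00 eqxx.
exists (fun j => - u (lift ord0 j) / u ord0).
have u0_C : ratr (u ord0) != 0 :> C by rewrite fmorph_eq0.
apply: (mulfI u0_C); rewrite mulr_sumr.
move/eqP: ufE; rewrite addr_eq0 => /eqP ->; rewrite -sumrN.
by apply: eq_bigr => j _; rewrite rmorphM rmorphN fmorphV mulrA mulrCA mulfV // mulr1 mulNr.
Qed.

Lemma ratr_real (C : numFieldType) (q : rat) : (ratr q : C) \is Num.real.
Proof. by rewrite realE ler0q lerq0 le_total. Qed.

Lemma root_map_intr_ratr (C : numFieldType) (p : {poly int}) (q : rat) :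
  root (map_poly (intr : int -> C) p) (ratr q) = root (map_poly (intr : int -> rat) p) q.
Proof.
rewrite -(fmorph_root (ratr : {rmorphism rat -> C})) -map_poly_comp.
by congr root; apply: eq_map_poly => m /=; rewrite ratr_int.
Qed.

(* algC is imported only locally: its %C scope would shadow that of complex. *)
Module RatIntegral.
Import algC algnum.

Lemma ratr_integral_int (C : numFieldType) (q : rat) :
  integralOver (intr : int -> C) (ratr q) -> q \is a Num.int.
Proof.
case=> p p_monic; rewrite root_map_intr_ratr -(root_map_intr_ratr algC) => pq0.
have Aint_q : (ratr q : algC) \in Aint.
  apply: root_monic_Aint pq0 (monic_map _ p_monic) _.
  by apply/polyOverP => i; rewrite coef_map intr_int.
have /intrP[m qE] := Cint_rat_Aint (Crat_rat q) Aint_q.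
suff -> : q = m%:~R by apply: intr_int.
by apply: (fmorph_inj (ratr : {rmorphism rat -> algC})); rewrite /= ratr_int -qE.
Qed.

End RatIntegral.
Import RatIntegral.

Lemma quadratic_other_root (F : idomainType) (w w' p q : F) : w != w' ->
  w ^+ 2 = p + q * w -> w' ^+ 2 = p + q * w' -> w' = q - w.
Proof.
move=> ww' w2 w'2; have /eqP : (w - w') * (w + w' - q) = 0.
  transitivity ((w ^+ 2 - q * w) - (w' ^+ 2 - q * w')); first by ring.
  by rewrite w2 w'2; ring.
rewrite mulf_eq0 subr_eq0 (negPf ww') /= subr_eq0 => /eqP wq.
by rewrite -wq; ring.
Qed.

Lemma conj_quadratic_root (C : numClosedFieldType) (w p q : C) :
  w \isn't Num.real -> p \is Num.real -> q \is Num.real ->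
  w ^+ 2 = p + q * w -> w^* = q - w.
Proof.
move=> /negP w_nreal /conj_Creal pJ /conj_Creal qJ w2.
apply: (quadratic_other_root _ w2); last by rewrite -rmorphXn w2 rmorphD rmorphM /= pJ qJ.
by apply/eqP => wJ; apply/w_nreal/CrealP; rewrite -wJ.
Qed.

Lemma conj_integral (C : numClosedFieldType) (z : C) :
  integralOver (intr : int -> C) z -> integralOver (intr : int -> C) z^*.
Proof.
case=> p p_monic pz0; exists p => //.
have -> : map_poly (intr : int -> C) p = map_poly Num.conj (map_poly intr p).
  by rewrite -map_poly_comp; apply: eq_map_poly => m /=; rewrite rmorph_int.
by rewrite fmorph_root.
Qed.

Section ComplexModulus.
Variable R : realType.

Lemma cabsE (w : R[i]) : (cabs w)%:C%C = `|w|.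
Proof. by rewrite /cabs RRe_real // normr_real. Qed.

Lemma cabs_ge0 (w : R[i]) : 0 <= cabs w.
Proof. by rewrite -ler0c cabsE. Qed.

Lemma cabs_subr_le (a b : R[i]) : cabs (a - b) <= cabs a + cabs b.
Proof. by rewrite -lecR rmorphD /= !cabsE ler_normB. Qed.

Lemma cabs_sub_le_diam (B : set R[i]) (M : R) a b :
  (forall z, B z -> cabs z <= M) -> B a -> B b -> cabs (a - b) <= diam B.
Proof.
move=> BM Ba Bb; apply: ub_le_sup; last by exists a => //; exists b.
exists (M + M) => _ [a' Ba' [b' Bb' <-]].
by apply: le_trans (cabs_subr_le a' b') _; apply: lerD; apply: BM.
Qed.

End ComplexModulus.

Section QuarticCMField.
Variables (R : realType) (K : set R[i]) (s : R[i] -> R[i]).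
Local Notation C := R[i].
Local Notation K0 := (real_part_field K).
Hypotheses (sK : is_subfield K) (es : field_embedding K s)
  (s_K0 : restricts_to_nontrivial_aut K0 s) (dimK0 : Qdim K0 2).

Lemma real_part_field_sub x : K0 x -> K x. Proof. by case. Qed.
Lemma real_part_field_real x : K0 x -> x \is Num.real. Proof. by case. Qed.
Lemma real_part_field_embedding x : K0 x -> K0 (s x). Proof. by case: s_K0 => + _; apply. Qed.

Lemma real_part_field_rat q : K0 (ratr q).
Proof. by split; [apply: subfield_rat | apply: ratr_real]. Qed.

Lemma real_part_fieldD x y : K0 x -> K0 y -> K0 (x + y).
Proof. by move=> [Kx xr] [Ky yr]; split; [apply: subfieldD | apply: rpredD]. Qed.

Lemma real_part_fieldM x y : K0 x -> K0 y -> K0 (x * y).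
Proof. by move=> [Kx xr] [Ky yr]; split; [apply: subfieldM | apply: rpredM]. Qed.

Lemma real_part_field_basis : exists2 x0, K0 x0 /\ s x0 != x0 &
  forall y, K0 y -> exists a b : rat, y = ratr a + ratr b * x0.
Proof.
case: s_K0 => _ [_ [x0 [K0x0 sx0]]]; exists x0 => //.
pose g (i : 'I_2) := if val i == 0%N then 1 else x0.
have sum2 (F : 'I_2 -> C) : \sum_i F i = F ord0 + F (lift ord0 ord0).
  by rewrite !big_ord_recl big_ord0 addr0.
have K0g i : K0 (g i).
  by rewrite /g; case: ifP => // _; rewrite -(rmorph1 ratr); apply: real_part_field_rat.
have g_free q : \sum_i ratr (q i) * g i = 0 -> forall i, q i = 0.
  rewrite sum2 /g /= mulr1 => /(moved_rat_free sK es sx0)[q0 q1].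
  by case=> -[|[|//]] i_lt; [rewrite -q0 | rewrite -q1]; congr q; apply: val_inj.
move=> y /(Qdim_free_spans dimK0 K0g g_free)[q ->].
by exists (q ord0), (q (lift ord0 ord0)); rewrite sum2 /g /= mulr1.
Qed.

Lemma real_part_field_norm_rat y : K0 y -> exists r : rat, y * s y = ratr r.
Proof.
have [x0 [K0x0 sx0] K0_span] := real_part_field_basis.
have [u [v x0_sq]] := K0_span _ (real_part_fieldM K0x0 K0x0).
have Kx0 := real_part_field_sub K0x0; have KQ := subfield_rat sK.
have sx0_sq : s x0 * s x0 = ratr u + ratr v * s x0.
  have Kvx0 := subfieldM sK (KQ v) Kx0.
  rewrite -(embeddingM es) // x0_sq (embeddingD es (KQ u) Kvx0) (embeddingM es (KQ v) Kx0).
  by rewrite !(embedding_rat sK es).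
(* s x0 is the other root of X^2 - v X - u, which makes y * s y the norm form of Q(x0). *)
have sx0E : s x0 = ratr v - x0.
  by apply: (quadratic_other_root (p := ratr u)); rewrite ?expr2 // eq_sym.
move=> /K0_span[a [b ->]]; exists (a * a + a * b * v - b * b * u).
have Kbx0 := subfieldM sK (KQ b) Kx0.
rewrite (embeddingD es (KQ a) Kbx0) (embeddingM es (KQ b) Kx0) !(embedding_rat sK es) sx0E.
rewrite !rmorphB !rmorphD !rmorphM /=.
transitivity (ratr a * ratr a + ratr a * ratr b * ratr v
              - ratr b * ratr b * (x0 * x0 - ratr v * x0)); first by ring.
by rewrite x0_sq; ring.
Qed.

Hypotheses (dimK : Qdim K 4) (K_imag : totally_imaginary K).

Lemma imaginary_generator : exists2 x, K x /\ x \isn't Num.real &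
  forall y, K y -> exists A B, [/\ K0 A, K0 B & y = A + B * x].
Proof.
have [x0 [K0x0 sx0] _] := real_part_field_basis.
have K0_lin a b : K0 (ratr a + ratr b * x0).
  exact: real_part_fieldD (real_part_field_rat _) (real_part_fieldM (real_part_field_rat _) K0x0).
have [x [Kx x_nreal]] : exists x, K x /\ x \isn't Num.real.
  by apply: K_imag. (* with the identity embedding *)
exists x => //.
pose g (i : 'I_4) := match val i with 0 => 1 | 1 => x0 | 2 => x | _ => x0 * x end.
have gE (q : 'I_4 -> rat) : \sum_i ratr (q i) * g i =
    (ratr (q ord0) + ratr (q (lift ord0 ord0)) * x0) +
    (ratr (q (lift ord0 (lift ord0 ord0)))
     + ratr (q (lift ord0 (lift ord0 (lift ord0 ord0)))) * x0) * x.
  by rewrite !big_ord_recl big_ord0 /g /=; ring.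
have Kx0 := real_part_field_sub K0x0.
have Kg i : K (g i).
  by case: i => -[|[|[|i]]] i_lt; rewrite /g /=; [apply: subfield1 | | | apply: subfieldM].
have g_free q : \sum_i ratr (q i) * g i = 0 -> forall i, q i = 0.
  rewrite gE; set A := _ + _ * x0; set B := _ + _ * x0 => ABx0.
  have [Ar Br] := (real_part_field_real (K0_lin _ _) : A \is Num.real,
                   real_part_field_real (K0_lin _ _) : B \is Num.real).
  have B0 : B = 0.
    apply/eqP; apply: contraNT x_nreal => B_neq0.
    suff -> : x = - A / B by rewrite realM ?realN ?realV.
    apply: (mulfI B_neq0); rewrite mulrCA mulfV // mulr1.
    by apply/eqP; rewrite -addr_eq0 addrC ABx0.
  move: ABx0; rewrite B0 mul0r addr0 => /(moved_rat_free sK es sx0)[q0 q1].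
  move: B0 => /(moved_rat_free sK es sx0)[q2 q3].
  by case=> -[|[|[|[|//]]]] i_lt; [rewrite -q0 | rewrite -q1 | rewrite -q2 | rewrite -q3];
    congr q; apply: val_inj.
move=> y /(Qdim_free_spans dimK Kg g_free)[q ->]; rewrite gE.
by do 2 eexists; split; last reflexivity; apply: K0_lin.
Qed.

Lemma embedding_conj y : K y -> K y^* /\ s y^* = (s y)^*.
Proof.
have [x [Kx x_nreal] K_span] := imaginary_generator.
have real_s u : K0 u -> s u \is Num.real.
  by move=> K0u; apply: real_part_field_real; apply: real_part_field_embedding.
have [a [c [K0a K0c x_sq]]] := K_span _ (subfieldM sK Kx Kx).
have [Ka Kc] := (real_part_field_sub K0a, real_part_field_sub K0c).
have xJ : x^* = c - x.
  apply: conj_quadratic_root x_nreal (real_part_field_real K0a) (real_part_field_real K0c) _.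
  by rewrite expr2.
have sx_nreal : s x \isn't Num.real.
  have [z [Kz sz_nreal]] := K_imag es; apply: contraNN sz_nreal => sx_real.
  have [A [B [K0A K0B ->]]] := K_span z Kz.
  have [KA KB] := (real_part_field_sub K0A, real_part_field_sub K0B).
  rewrite (embeddingD es) ?(embeddingM es) //.
    by apply: realD (real_s _ K0A) (realM (real_s _ K0B) _).
  exact: subfieldM.
have sxJ : (s x)^* = s c - s x.
  apply: conj_quadratic_root sx_nreal (real_s _ K0a) (real_s _ K0c) _.
  rewrite expr2 -(embeddingM es) // x_sq (embeddingD es) ?(embeddingM es) //.
  exact: subfieldM.
move=> /K_span[A [B [K0A K0B ->]]].
have [KA KB] := (real_part_field_sub K0A, real_part_field_sub K0B).
have yJ : (A + B * x)^* = A + B * (c - x).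
  by rewrite rmorphD rmorphM /= xJ !conj_Creal ?real_part_field_real.
have KBcx := subfieldM sK KB (subfieldB sK Kc Kx).
rewrite yJ (embeddingD es) // (embeddingM es) ?(embeddingB sK es) //; last exact: subfieldB.
split; first exact: subfieldD.
rewrite (embeddingD es) ?(embeddingM es) //; last exact: subfieldM.
by rewrite rmorphD rmorphM /= sxJ !conj_Creal ?real_s.
Qed.

Lemma ring_of_integers_norm_ge1 z :
  ring_of_integers K z -> z != 0 -> 1 <= cabs z * cabs (s z).
Proof.
move=> [Kz Iz] z_neq0; have [KzJ szJ] := embedding_conj Kz.
have K0zzJ : K0 (z * z^*) by split; [apply: subfieldM | apply/ger0_real/mul_conjC_ge0].
have [r rE] := real_part_field_norm_rat K0zzJ.
have normE : ((cabs z * cabs (s z)) ^+ 2)%:C%C = ratr r.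
  by rewrite -rE (embeddingM es) // szJ rmorphXn rmorphM /= !cabsE exprMn !normCK.
have Ir : integralOver (intr : int -> C) (ratr r).
  rewrite -rE (embeddingM es) // szJ.
  have Isz := embedding_integral sK es Kz Iz.
  by apply: integral_mul; apply: integral_mul => //; apply: conj_integral.
have r_gt0 : 0 < ratr r :> C.
  rewrite -rE (embeddingM es) // szJ -!normCK.
  by rewrite mulr_gt0 ?exprn_gt0 ?normr_gt0 ?(embedding_eq0 sK es).
have r_ge1 : 1 <= ratr r :> C.
  move: r_gt0; have /intrP[m ->] := ratr_integral_int Ir.
  by rewrite ratr_int ltr0z ler1z -gtz0_ge1.
move: r_ge1; rewrite -normE -(rmorph1 (real_complex R)) lecR.
have := mulr_ge0 (cabs_ge0 z) (cabs_ge0 (s z)); nra.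
Qed.

End QuarticCMField.

Local Open Scope classical_set_scope.

Theorem mainTheorem2 (R : realType) (K : set R[i]) (s : R[i] -> R[i]) (B : set R[i]) :
  number_field K 4 ->
  totally_imaginary K ->
  Qdim (real_part_field K) 2 ->
  field_embedding K s ->
  restricts_to_nontrivial_aut (real_part_field K) s ->
  (exists M : R, forall z, B z -> cabs z <= M) ->
  (exists r : R, 0 < r /\ forall z, cabs z < r -> B z) ->
  forall z1 z2,
    ring_of_integers K z1 -> B (s z1) ->
    ring_of_integers K z2 -> B (s z2) ->
    z1 != z2 ->
    1 / (2 * diam B) <= cabs (z1 - z2).
Proof.
move=> [sK dimK] K_imag dimK0 es s_K0 [M BM] _ z1 z2 [Kz1 Iz1] Bz1 [Kz2 Iz2] Bz2 z12.
have Oz : ring_of_integers K (z1 - z2) by split; [apply: subfieldB | apply: integral_sub].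
have := ring_of_integers_norm_ge1 sK es s_K0 dimK0 dimK K_imag Oz.
rewrite subr_eq0 (embeddingB sK es) // => /(_ z12) norm_ge1.
have diam_ge := cabs_sub_le_diam BM Bz1 Bz2.
have a_ge0 := cabs_ge0 (z1 - z2); have d_ge0 := cabs_ge0 (s z1 - s z2).
have D_gt0 : 0 < diam B by nra.
by rewrite ler_pdivrMr ?mulr_gt0 //; nra.
Qed.
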